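(* Let $w_1,w_2$ be real numbers with $0\le w_1<w_2$, $\mathbf{w}=[w_1,w_2]^\top$, and define on $\mathbb{R}^2$ the ROWL penalty $\Omega_{\mathbf{w}}(\mathbf{x})=\mathbf{w}^\top|\mathbf{x}|_{\downarrow}$ and its envelope $\widetilde\Omega_{\mathbf{w}}=(\Omega_{\mathbf{w}}+\tfrac12\|\cdot\|^2)^{**}-\tfrac12\|\cdot\|^2$. For every $\delta>0$, the operator $R_\delta:=\mathrm{s\text{-}Prox}_{\widetilde\Omega_{\mathbf{w}}/(\delta+1)}:\mathbb{R}^2\to\mathbb{R}^2$ is the gradient of a (Fréchet) differentiable convex function, and this gradient is $(1+1/\delta)$-Lipschitz continuous.
   Context: $\|\cdot\|$ is the Euclidean norm on $\mathbb{R}^2$. For $\mathbf{x}\in\mathbb{R}^2$, $|\mathbf{x}|$ is the componentwise absolute value and $|\mathbf{x}|_{\downarrow}$ is $|\mathbf{x}|$ sorted in nonincreasing order. $g^{**}$ denotes the Fenchel biconjugate, where $g^*(u)=\sup_x(\langle x,u\rangle-g(x))$. For a function $g$ such that $\operatorname{argmin}_{\mathbf{y}}\big(g(\mathbf{y})+\frac12\|\mathbf{x}-\mathbf{y}\|^2\big)$ is a singleton for every $\mathbf{x}$, $\mathrm{s\text{-}Prox}_g(\mathbf{x})$ denotes that unique minimizer. *)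

From HB Require Import structures.
From mathcomp Require Import all_boot all_order all_algebra.
From mathcomp Require Import all_classical all_reals all_analysis.
Set Implicit Arguments. Unset Strict Implicit. Unset Printing Implicit Defensive.
Import Order.TTheory GRing.Theory Num.Theory.
Import numFieldNormedType.Exports.
Local Open Scope classical_set_scope.
Local Open Scope ring_scope.

Section Defs.
Variable R : realType.
Implicit Types x y u : R * R.

Definition inner2 x y : R := x.1 * y.1 + x.2 * y.2.
Definition sqnorm2 x : R := inner2 x x.
Definition enorm2 x : R := Num.sqrt (sqnorm2 x).

Definition absdown x : R * R :=
  (Num.max `|x.1| `|x.2|, Num.min `|x.1| `|x.2|).

Definition rowl (w1 w2 : R) x : R := inner2 (w1, w2) (absdown x).

Definition fconj (g : R * R -> \bar R) (u : R * R) : \bar R :=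
  ereal_sup (range (fun x => ((inner2 x u)%:E - g x)%E)).
Definition fbiconj (g : R * R -> \bar R) : R * R -> \bar R := fconj (fconj g).

Definition rowl_env (w1 w2 : R) x : \bar R :=
  (fbiconj (fun y => (rowl w1 w2 y + sqnorm2 y / 2)%:E) x - (sqnorm2 x / 2)%:E)%E.

Definition prox_obj (g : R * R -> \bar R) x y : \bar R :=
  (g y + (sqnorm2 (x - y) / 2)%:E)%E.
Definition is_sprox (g : R * R -> \bar R) x y : Prop :=
  (forall z, (prox_obj g x y <= prox_obj g x z)%E) /\
  (forall z, (forall z', (prox_obj g x z <= prox_obj g x z')%E) -> z = y).

Definition convex_fun2 (f : R * R -> R) : Prop :=
  forall x y (t : R), 0 <= t -> t <= 1 ->
    f (t *: x + (1 - t) *: y) <= t * f x + (1 - t) * f y.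
End Defs.

From HB Require Import structures.
From mathcomp Require Import all_boot all_order all_algebra.
From mathcomp Require Import all_classical all_reals all_analysis.
From mathcomp Require Import lra ring.
Set Implicit Arguments. Unset Strict Implicit. Unset Printing Implicit Defensive.
Import Order.TTheory GRing.Theory Num.Theory.
Import numFieldNormedType.Exports.
Local Open Scope ring_scope.

(* Let g := Omega_w + 1/2 ||.||^2 and G := g**, so that the envelope is
   G - 1/2 ||.||^2 and R_delta(x) minimises lam (G z - 1/2 ||z||^2) + 1/2 ||x - z||^2
   with lam = 1/(1 + delta).  Whenever u is a subgradient of G at y and
   x = lam u + (1 - lam) y, this objective exceeds its value at y by at least
   (1 - lam)/2 ||z - y||^2.  Hence y is the unique minimiser, x |-> y is
   (1 - lam)-strongly monotone, so (1 - lam)^-1 = 1 + 1/delta Lipschitz, and it is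
   a subgradient, hence the gradient, of the convex function
   1/2 ||x||^2 - min_z (objective).
   Such pairs (u, y) are built explicitly.  At a sorted nonnegative point, the
   prox of Omega_w is coordinatewise soft thresholding, and G is affine with slope
   u on the segment joining two prox points of Omega_w at u.  By the sign and swap
   symmetries of Omega_w it suffices to treat sorted nonnegative x: either
   inverting soft thresholding coordinatewise gives a sorted u, or the two
   coordinates would cross and y lies on the segment between a prox point at
   u = (s, s) and its swap. *)

Section Euclid.
Variable R : realType.
Implicit Types x y z : R * R.

Lemma inner2C x y : inner2 x y = inner2 y x.
Proof. by rewrite /inner2 mulrC [x.2 * _]mulrC. Qed.

Lemma sqnorm2_ge0 x : 0 <= sqnorm2 x.
Proof. by rewrite /sqnorm2 /inner2 addr_ge0 // -expr2 sqr_ge0. Qed.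

Lemma sqnorm2_eq0 x : sqnorm2 x = 0 -> x = 0.
Proof.
case: x => a b; rewrite /sqnorm2 /inner2 /= => /eqP.
rewrite paddr_eq0 -?expr2 ?sqr_ge0 // !sqrf_eq0 => /andP[/eqP-> /eqP->] //.
Qed.

Lemma sqr_enorm2 x : enorm2 x ^+ 2 = sqnorm2 x.
Proof. by rewrite /enorm2 sqr_sqrtr // sqnorm2_ge0. Qed.

Lemma inner2_le_enorm2 x y : inner2 x y <= enorm2 x * enorm2 y.
Proof.
have lagrange : inner2 x y ^+ 2 <= sqnorm2 x * sqnorm2 y.
  rewrite /sqnorm2 /inner2 -subr_ge0.
  have -> : (x.1 * x.1 + x.2 * x.2) * (y.1 * y.1 + y.2 * y.2) - (x.1 * y.1 + x.2 * y.2) ^+ 2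
      = (x.1 * y.2 - x.2 * y.1) ^+ 2 by ring.
  exact: sqr_ge0.
rewrite (le_trans (ler_norm _)) // -sqrtr_sqr /enorm2 -sqrtrM ?sqnorm2_ge0 //.
exact: ler_wsqrtr.
Qed.

Lemma enorm2_le_of_inner2 (mu : R) x y : 0 < mu -> mu * sqnorm2 x <= inner2 y x ->
  enorm2 x <= mu^-1 * enorm2 y.
Proof.
move=> mu_gt0 h; rewrite ler_pdivlMl //.
have nx0 : 0 <= enorm2 x by exact: sqrtr_ge0.
have : mu * enorm2 x * enorm2 x <= enorm2 y * enorm2 x.
  by rewrite -mulrA -expr2 sqr_enorm2 (le_trans h) // inner2_le_enorm2.
have [->|nx_gt0] := eqVneq (enorm2 x) 0; first by rewrite !mulr0 => _; apply: sqrtr_ge0.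
by rewrite ler_pM2r // lt_def nx_gt0.
Qed.

Lemma scale2E (t : R) x : t *: x = (t * x.1, t * x.2).
Proof. by []. Qed.

Lemma add2E x y : x + y = (x.1 + y.1, x.2 + y.2).
Proof. by []. Qed.
End Euclid.

Section Subgradient.
Variable R : realType.
Implicit Types (f : R * R -> R) (x y z u p : R * R).

Definition subgradient f x u := forall z, f x + inner2 (z - x) u <= f z.

Definition prox_point f u p := forall z, f p + sqnorm2 (u - p) / 2 <= f z + sqnorm2 (u - z) / 2.

Lemma prox_point_subgradient f u p :
  prox_point f u p -> subgradient (fun z => f z + sqnorm2 z / 2) p u.
Proof. by move=> pp z; have := pp z; rewrite /sqnorm2 /inner2 /=; lra. Qed.

Lemma prox_point_sym f (T : R * R -> R * R) u p : involutive T ->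
  {morph T : a b / a - b} -> (forall z, sqnorm2 (T z) = sqnorm2 z) ->
  (forall z, f (T z) = f z) -> prox_point f u p -> prox_point f (T u) (T p).
Proof.
move=> TK Tsub Tnorm fT pp z.
have -> : T u - z = T (u - T z) by rewrite Tsub TK.
by rewrite -Tsub !Tnorm fT -(fT z); apply: pp.
Qed.

Lemma subgradient_convex f : (forall x, exists u, subgradient f x u) -> convex_fun2 f.
Proof.
move=> hf a b t t0 t1; set p := t *: a + (1 - t) *: b.
have [u fp] := hf p.
have ha : 0 <= t * (f a - f p - inner2 (a - p) u).
  by apply: mulr_ge0 => //; have := fp a; lra.
have hb : 0 <= (1 - t) * (f b - f p - inner2 (b - p) u).
  by apply: mulr_ge0; [lra | have := fp b; lra].
suff : t * inner2 (a - p) u + (1 - t) * inner2 (b - p) u = 0 by lra.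
by rewrite /inner2 /p !scale2E /=; ring.
Qed.

Lemma subgradient_remainder f (df : R * R -> R * R) (L : R) :
  (forall x, subgradient f x (df x)) ->
  (forall x y, enorm2 (df x - df y) <= L * enorm2 (x - y)) ->
  forall x h, `|f (h + x) - f x - inner2 (df x) h| <= L * sqnorm2 h.
Proof.
move=> sub lip x h.
have lo : inner2 (df x) h <= f (h + x) - f x.
  by have := sub x (h + x); rewrite /inner2 /=; lra.
have up : f (h + x) - f x - inner2 (df x) h <= inner2 h (df (h + x) - df x).
  by have := sub (h + x) x; rewrite /inner2 /=; lra.
rewrite ger0_norm ?subr_ge0 // (le_trans up) // (le_trans (inner2_le_enorm2 _ _)) //.
have := lip (h + x) x; rewrite addrK -sqr_enorm2 expr2 mulrCA => lipx.
by apply: ler_wpM2l => //; apply: sqrtr_ge0.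
Qed.
End Subgradient.

Section Differentiable.
Variable R : realType.

Lemma sqnorm2_le_normr (h : R * R) : sqnorm2 h <= 2 * `|h| ^+ 2.
Proof.
have sq (a : R) : a * a = `|a| ^+ 2 by rewrite -normrX ger0_norm -?expr2 ?sqr_ge0.
have n1 : `|h.1| <= `|h| by rewrite prod_normE le_max lexx.
have n2 : `|h.2| <= `|h| by rewrite prod_normE le_max lexx orbT.
rewrite /sqnorm2 /inner2 !sq mulr_natl mulr2n.
by apply: lerD; rewrite lerXn2r ?nnegrE.
Qed.

Lemma inner2_continuous (y : R * R) : continuous (inner2 y).
Proof.
move=> h; apply: cvgD; apply: cvgMl_tmp; [exact: cvg_fst | exact: cvg_snd].
Qed.

Lemma differentiable_of_remainder (f : R * R -> R) (x y : R * R) (L : R) : 0 <= L ->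
  (forall h, `|f (h + x) - f x - inner2 y h| <= L * sqnorm2 h) ->
  differentiable f x /\ 'd f x = inner2 y :> (R * R -> R).
Proof.
move=> L0 rem.
have inner2_linear : linear (inner2 y).
  by move=> a u v; rewrite /inner2 /= /GRing.scale /=; ring.
pose df : {linear _ -> _} := HB.pack (inner2 y) (GRing.isLinear.Build _ _ _ _ _ inner2_linear).
have littleo : f \o shift x = cst (f x) + (df : R * R -> R) +o_ (0 : R * R) id.
  apply/eqaddoP => e e0.
  have L1_gt0 : 0 < 2 * L + 1 by lra.
  have r_gt0 : 0 < (2 * L + 1)^-1 * e by rewrite mulr_gt0 ?invr_gt0.
  near=> h; rewrite /= opprD addrA (le_trans (rem h)) //.
  have h_small : (2 * L + 1) * `|h| <= e.
    rewrite -ler_pdivlMl //; near: h; exact (nbhs0_le (V := (R * R)%type) r_gt0).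
  rewrite (le_trans (ler_wpM2l L0 (sqnorm2_le_normr h))) // expr2.
  by have := normr_ge0 h; nra.
have df_cont : continuous df by move=> h; apply: inner2_continuous.
have dfE := diff_unique df_cont littleo.
by split; [apply/diff_locallyP; rewrite dfE | rewrite dfE].
Unshelve. all: by end_near.
Qed.
End Differentiable.

Section Biconjugate.
Variables (R : realType) (g : R * R -> R).
Implicit Types (a b x y z u p q : R * R).

Lemma fconj_ge z u : ((inner2 z u - g z)%:E <= fconj (EFin \o g) u)%E.
Proof. by apply: ereal_sup_ubound; exists z. Qed.

Lemma fconj_subgradient p u :
  subgradient g p u -> fconj (EFin \o g) u = (inner2 p u - g p)%:E.
Proof.
move=> gp; apply/le_anti; rewrite fconj_ge andbT.
apply: ge_ereal_sup => _ [z _ <-]; rewrite lee_fin.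
by have := gp z; rewrite /inner2 /=; lra.
Qed.

Lemma fbiconj_le_convex a b (th : R) : 0 <= th <= 1 ->
  (fbiconj (EFin \o g) (th *: a + (1 - th) *: b)%R <= (th * g a + (1 - th) * g b)%:E)%E.
Proof.
move=> /andP[th0 th1]; apply: ge_ereal_sup => _ [v _ <-].
have := fconj_ge a v; have := fconj_ge b v.
case: (fconj (EFin \o g) v) => [r | | ] //=; rewrite ?lee_fin => hb ha.
- have ka : 0 <= th * (r - (inner2 a v - g a)) by apply: mulr_ge0; lra.
  have kb : 0 <= (1 - th) * (r - (inner2 b v - g b)) by apply: mulr_ge0; lra.
  have -> : inner2 v (th *: a + (1 - th) *: b) = th * inner2 a v + (1 - th) * inner2 b v.
    by rewrite !scale2E /inner2 /=; ring.
  lra.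
- by rewrite addeNy leNye.
Qed.

Lemma fbiconj_ge_subgradient p u z :
  subgradient g p u -> ((g p + inner2 (z - p) u)%:E <= fbiconj (EFin \o g) z)%E.
Proof.
move=> gp; apply: ereal_sup_ubound; exists u => //.
by rewrite (fconj_subgradient gp) /inner2 /=; congr (_%:E); lra.
Qed.

Lemma fbiconj_le z : (fbiconj (EFin \o g) z <= (g z)%:E)%E.
Proof.
apply: ge_ereal_sup => _ [v _ <-]; have := fconj_ge z v.
case: (fconj (EFin \o g) v) => [r | | ] //=; last by rewrite addeNy leNye.
by rewrite -EFinD !lee_fin inner2C; lra.
Qed.

Definition fbiconj_real z := fine (fbiconj (EFin \o g) z).

Lemma fbiconj_realE p u : subgradient g p u ->
  forall z, fbiconj (EFin \o g) z = (fbiconj_real z)%:E.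
Proof.
move=> gp z; have lo := fbiconj_ge_subgradient z gp; have up := fbiconj_le z.
by rewrite /fbiconj_real; move: lo up; case: (fbiconj _ z).
Qed.

Lemma subgradient_fbiconj_real p q u (th : R) : 0 <= th <= 1 ->
  subgradient g p u -> subgradient g q u -> subgradient fbiconj_real (th *: p + (1 - th) *: q) u.
Proof.
move=> th01 gp gq z.
have fin := fbiconj_realE gp.
have up := fbiconj_le_convex p q th01; rewrite fin lee_fin in up.
have lo := fbiconj_ge_subgradient z gp; rewrite fin lee_fin in lo.
have gq_eq : g q = g p + inner2 (q - p) u.
  by have := gp q; have := gq p; rewrite /inner2 /=; lra.
suff : th * g p + (1 - th) * g q + inner2 (z - (th *: p + (1 - th) *: q)) u
    = g p + inner2 (z - p) u by lra.
by rewrite gq_eq !scale2E /inner2 /=; ring.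
Qed.
End Biconjugate.

Section EnvelopeProx.
Variables (R : realType) (G : R * R -> R) (lam : R).
Hypotheses (lam_ge0 : 0 <= lam) (lam_lt1 : lam < 1).
Implicit Types (x y z u : R * R).

Definition env_prox_obj x z := (G z - sqnorm2 z / 2) * lam + sqnorm2 (x - z) / 2.

Lemma env_prox_obj_growth x y u : subgradient G y u -> x = lam *: u + (1 - lam) *: y ->
  forall z, env_prox_obj x y + (1 - lam) / 2 * sqnorm2 (z - y) <= env_prox_obj x z.
Proof.
move=> Gy -> z.
have : 0 <= lam * (G z - G y - inner2 (z - y) u) by apply: mulr_ge0 => //; have := Gy z; lra.
suff -> : lam * (G z - G y - inner2 (z - y) u) = env_prox_obj (lam *: u + (1 - lam) *: y) z
    - env_prox_obj (lam *: u + (1 - lam) *: y) y - (1 - lam) / 2 * sqnorm2 (z - y) by lra.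
by rewrite /env_prox_obj /sqnorm2 !scale2E /inner2 /=; field.
Qed.

Variable Rd : R * R -> R * R.
Hypothesis Rd_growth :
  forall x z, env_prox_obj x (Rd x) + (1 - lam) / 2 * sqnorm2 (z - Rd x) <= env_prox_obj x z.

Lemma env_prox_obj_min x z : env_prox_obj x (Rd x) <= env_prox_obj x z.
Proof.
have c_ge0 : 0 <= (1 - lam) / 2 by rewrite divr_ge0 // subr_ge0 (ltW lam_lt1).
by have := Rd_growth x z; have := mulr_ge0 c_ge0 (sqnorm2_ge0 (z - Rd x)); lra.
Qed.

Lemma env_prox_obj_argmin x z : (forall z', env_prox_obj x z <= env_prox_obj x z') -> z = Rd x.
Proof.
move=> zmin; have := Rd_growth x z; have := zmin (Rd x).
have c_gt0 : 0 < (1 - lam) / 2 by rewrite divr_gt0 // subr_gt0.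
move=> le1 le2; have : (1 - lam) / 2 * sqnorm2 (z - Rd x) <= 0 by lra.
rewrite pmulr_rle0 // => sq_le0.
by apply/subr0_eq/sqnorm2_eq0/le_anti; rewrite sq_le0 sqnorm2_ge0.
Qed.

Lemma Rd_strongly_monotone x y :
  (1 - lam) * sqnorm2 (Rd x - Rd y) <= inner2 (x - y) (Rd x - Rd y).
Proof.
have := Rd_growth x (Rd y); have := Rd_growth y (Rd x).
by rewrite /env_prox_obj /sqnorm2 /inner2 /=; lra.
Qed.

Lemma Rd_lipschitz x y : enorm2 (Rd x - Rd y) <= (1 - lam)^-1 * enorm2 (x - y).
Proof. by apply: enorm2_le_of_inner2; [rewrite subr_gt0 | exact: Rd_strongly_monotone]. Qed.

Definition prox_potential x := sqnorm2 x / 2 - env_prox_obj x (Rd x).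

Lemma prox_potential_subgradient x : subgradient prox_potential x (Rd x).
Proof.
move=> z; have := env_prox_obj_min z (Rd x).
by rewrite /prox_potential /env_prox_obj /sqnorm2 /inner2 /=; lra.
Qed.

Lemma Rd_is_sprox (h : R * R -> \bar R) :
  (forall z, h z = ((G z - sqnorm2 z / 2) * lam)%:E) -> forall x, is_sprox h x (Rd x).
Proof.
move=> hE x; have objE z : prox_obj h x z = (env_prox_obj x z)%:E by rewrite /prox_obj hE.
split=> [z | z zmin]; first by rewrite !objE lee_fin env_prox_obj_min.
by apply: env_prox_obj_argmin => z'; have := zmin z'; rewrite !objE lee_fin.
Qed.
End EnvelopeProx.

Section SoftThreshold.
Variable R : realType.
Implicit Types a w t lam x : R.

Definition soft a w := Num.max 0 (a - w).

Lemma soft0 a w : a <= w -> soft a w = 0.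
Proof. by move=> aw; apply/max_idPl; rewrite subr_le0. Qed.

Lemma softE a w : w <= a -> soft a w = a - w.
Proof. by move=> wa; apply/max_idPr; rewrite subr_ge0. Qed.

Lemma soft_ge0 a w : 0 <= soft a w.
Proof. by rewrite le_max lexx. Qed.

Lemma soft_minimizes a w t : 0 <= a -> 0 <= w ->
  w * soft a w + (a - soft a w) ^+ 2 / 2 <= w * `|t| + (a - t) ^+ 2 / 2.
Proof.
move=> a0 w0.
have abs_closer : (a - `|t|) ^+ 2 <= (a - t) ^+ 2.
  have := ler_wpM2l a0 (ler_norm t); rewrite !sqrrB real_normK ?num_real //; lra.
suff : w * soft a w + (a - soft a w) ^+ 2 / 2 <= w * `|t| + (a - `|t|) ^+ 2 / 2 by lra.
have s0 := normr_ge0 t; rewrite !expr2.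
have [aw | wa] := lerP a w; [rewrite (soft0 aw) | rewrite (softE (ltW wa))].
- have : 0 <= `|t| * (w - a) by rewrite mulr_ge0 // subr_ge0.
  by have := mulr_ge0 s0 s0; lra.
- by have := sqr_ge0 (a - w - `|t|); rewrite expr2; lra.
Qed.

Definition soft_inv lam x w := Num.min (x / lam) (x + (1 - lam) * w).

Lemma soft_invK lam x w : 0 < lam -> lam < 1 -> 0 <= w ->
  lam * soft_inv lam x w + (1 - lam) * soft (soft_inv lam x w) w = x.
Proof.
move=> lam0 lam1 w0; rewrite /soft_inv.
have xE : lam * (x / lam) = x by rewrite mulrC divfK ?gt_eqF.
have [xw | wx] := lerP x (lam * w).
- have le_w : x / lam <= w by rewrite ler_pdivrMr // mulrC.
  have le_min : x / lam <= x + (1 - lam) * w.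
    have : 0 <= (1 - lam) * (w - x / lam).
      by apply: mulr_ge0; rewrite subr_ge0; [exact: ltW | exact: le_w].
    lra.
  by rewrite (min_idPl le_min) (soft0 le_w) mulr0 addr0.
- have w_lt : w < x / lam by rewrite ltr_pdivlMr // mulrC.
  have le_min : x + (1 - lam) * w <= x / lam.
    have : 0 <= (1 - lam) * (x / lam - w).
      by apply: mulr_ge0; rewrite subr_ge0; exact: ltW.
    lra.
  have w_le : w <= x + (1 - lam) * w by lra.
  by rewrite (min_idPr le_min) (softE w_le); ring.
Qed.

Lemma soft_inv_ge0 lam x w : 0 < lam -> lam < 1 -> 0 <= x -> 0 <= w -> 0 <= soft_inv lam x w.
Proof.
move=> lam0 lam1 x0 w0; rewrite le_min divr_ge0 ?(ltW lam0) //=.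
by rewrite addr_ge0 // mulr_ge0 // subr_ge0 (ltW lam1).
Qed.

Lemma soft_inv_crossing lam x1 x2 w1 w2 : 0 < lam -> x2 <= x1 ->
  soft_inv lam x1 w1 < soft_inv lam x2 w2 ->
  x1 + (1 - lam) * w1 < x2 + (1 - lam) * w2 /\ lam * (x1 + (1 - lam) * w1) < x2.
Proof.
move=> lam0 x21; rewrite /soft_inv.
have x21' : x2 / lam <= x1 / lam by rewrite ler_pM2r ?invr_gt0.
have [le1 | lt1] := lerP (x1 + (1 - lam) * w1) (x1 / lam).
  by rewrite lt_min ltr_pdivlMr // [_ * lam]mulrC => /andP[].
by rewrite lt_min ltNge x21'.
Qed.

Lemma segment_swap a b c d : a + b = c + d -> 0 <= a - b -> a - b <= c - d ->
  exists2 th, 0 <= th <= 1 & a = th * c + (1 - th) * d /\ b = th * d + (1 - th) * c.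
Proof.
move=> sum_eq ab0 abcd.
have [cd0 | cd_gt0] := lerP (c - d) 0.
  by exists 1; [rewrite ler01 lexx | split; lra].
set r := (a - b) / (c - d).
have r0 : 0 <= r := divr_ge0 ab0 (ltW cd_gt0).
have r1 : r <= 1 by rewrite ler_pdivrMr // mul1r.
have rE : r * (c - d) = a - b by rewrite divfK ?gt_eqF.
by exists ((1 + r) / 2); [apply/andP; split | split]; lra.
Qed.
End SoftThreshold.

Section Rowl.
Variables (R : realType) (w1 w2 : R).
Hypotheses (w1_ge0 : 0 <= w1) (w1_lt_w2 : w1 < w2).
Implicit Types (x y z u p q : R * R) (lam : R).

Lemma absdown_sorted p : 0 <= p.2 <= p.1 -> absdown p = p.
Proof.
case: p => a b /= /andP[b0 ba].
by rewrite /absdown /= !ger0_norm ?(le_trans b0) // (max_idPl ba) (min_idPr ba).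
Qed.

Lemma sqnorm2_sub_absdown u z : 0 <= u.2 <= u.1 -> sqnorm2 (u - absdown z) <= sqnorm2 (u - z).
Proof.
move=> /andP[u2_ge0 u21].
have sq (a : R) : `|a| * `|a| = a * a by rewrite -normrM -expr2 ger0_norm ?sqr_ge0.
have le1 : u.1 * z.1 <= u.1 * `|z.1| := ler_wpM2l (le_trans u2_ge0 u21) (ler_norm _).
have le2 : u.2 * z.2 <= u.2 * `|z.2| := ler_wpM2l u2_ge0 (ler_norm _).
have sq1 := sq z.1; have sq2 := sq z.2; rewrite /absdown /sqnorm2 /inner2 /=.
have [n12 | n21] := lerP `|z.1| `|z.2|; last lra.
have : 0 <= (u.1 - u.2) * (`|z.2| - `|z.1|) by rewrite mulr_ge0 // subr_ge0.
lra.
Qed.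

Lemma prox_point_rowl_sorted u : 0 <= u.2 <= u.1 ->
  prox_point (rowl w1 w2) u (soft u.1 w1, soft u.2 w2).
Proof.
move=> u_sorted z; have /andP[u2_ge0 u21] := u_sorted.
have p_sorted : 0 <= (soft u.1 w1, soft u.2 w2).2 <= (soft u.1 w1, soft u.2 w2).1.
  by rewrite /= soft_ge0 le_max2 // lerB // (ltW w1_lt_w2).
have a1_ge0 : 0 <= (absdown z).1 by rewrite le_max normr_ge0.
have a2_ge0 : 0 <= (absdown z).2 by rewrite le_min !normr_ge0.
have s1 := soft_minimizes (absdown z).1 (le_trans u2_ge0 u21) w1_ge0.
have s2 := soft_minimizes (absdown z).2 u2_ge0 (le_trans w1_ge0 (ltW w1_lt_w2)).
rewrite !ger0_norm // !expr2 in s1 s2.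
have := sqnorm2_sub_absdown z u_sorted.
move: s1 s2; rewrite /rowl (absdown_sorted p_sorted) /sqnorm2 /inner2 /=; lra.
Qed.

Definition rowl_symmetry (T : R * R -> R * R) := [/\ involutive T,
  forall a b p q, T (a *: p + b *: q) = a *: T p + b *: T q,
  forall z, sqnorm2 (T z) = sqnorm2 z & forall z, absdown (T z) = absdown z].

Lemma rowl_symmetry_swap : rowl_symmetry (fun z => (z.2, z.1)).
Proof.
split; first by case.
- by [].
- by move=> z; rewrite /sqnorm2 /inner2 addrC.
- by move=> z; rewrite /absdown maxC minC.
Qed.

Lemma rowl_symmetry_negl : rowl_symmetry (fun z => (- z.1, z.2)).
Proof.
split; first by move=> [a b] /=; rewrite opprK.
- by move=> a b p q; rewrite !scale2E /= opprD -!mulrN.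
- by move=> z; rewrite /sqnorm2 /inner2 /= mulrNN.
- by move=> z; rewrite /absdown /= normrN.
Qed.

Lemma rowl_symmetry_negr : rowl_symmetry (fun z => (z.1, - z.2)).
Proof.
split; first by move=> [a b] /=; rewrite opprK.
- by move=> a b p q; rewrite !scale2E /= opprD -!mulrN.
- by move=> z; rewrite /sqnorm2 /inner2 /= mulrNN.
- by move=> z; rewrite /absdown /= normrN.
Qed.

Lemma prox_point_rowl_sym T u p : rowl_symmetry T ->
  prox_point (rowl w1 w2) u p -> prox_point (rowl w1 w2) (T u) (T p).
Proof.
move=> [TK Tlin Tnorm Tabs]; apply: prox_point_sym => // [a b | z].
  by have := Tlin 1 (-1) a b; rewrite !scale1r !scaleN1r.
by rewrite /rowl Tabs.
Qed.

(* By prox_point_subgradient, [u] is a subgradient of [rowl + 1/2 ||.||^2] at both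
   [p] and [q], so the biconjugate of that function is affine with slope [u] on the
   segment [p, q], which contains [y]. *)
Definition rowl_cert lam x y := exists u p q (th : R), [/\ 0 <= th <= 1,
  prox_point (rowl w1 w2) u p, prox_point (rowl w1 w2) u q,
  y = th *: p + (1 - th) *: q & x = lam *: u + (1 - lam) *: y].

Lemma rowl_cert_sym T lam x y : rowl_symmetry T -> rowl_cert lam x y -> rowl_cert lam (T x) (T y).
Proof.
move=> Tsym; have [_ Tlin _ _] := Tsym.
move=> [u [p [q [th [th01 pp pq yE xE]]]]].
exists (T u), (T p), (T q), th; split => //.
- exact: prox_point_rowl_sym.
- exact: prox_point_rowl_sym.
- by rewrite yE Tlin.
- by rewrite xE Tlin.
Qed.

(* [(s, s)] is the point [u] of the certificate in the tie case; the second
   coordinate of its prox point is thresholded to 0 iff [s <= w2]. *)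
Lemma tie_level lam (x1 x2 : R) : 0 < lam -> lam < 1 -> x2 <= x1 ->
  x1 - x2 <= (1 - lam) * (w2 - w1) -> lam * (x1 + (1 - lam) * w1) <= x2 ->
  exists2 s, w1 <= s & 2 * lam * s + (1 - lam) * (soft s w1 + soft s w2) = x1 + x2
                       /\ x1 - x2 <= (1 - lam) * (soft s w1 - soft s w2).
Proof.
move=> lam0 lam1 x21 T1 T2; have w12 := w1_lt_w2.
have x1_ge : lam * w1 <= x1.
  have : 0 <= (1 - lam) * (x1 - lam * w1) by lra.
  by rewrite pmulr_rge0 ?subr_ge0 //; lra.
have sum_ge : 2 * lam * w1 <= x1 + x2 by nra.
have [low | high] := lerP (x1 + x2) ((1 + lam) * w2 - (1 - lam) * w1).
- pose s := (x1 + x2 + (1 - lam) * w1) / (1 + lam).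
  have sE : s * (1 + lam) = x1 + x2 + (1 - lam) * w1 by rewrite divfK ?gt_eqF //; lra.
  have w1s : w1 <= s by rewrite ler_pdivlMr; lra.
  have sw2 : s <= w2 by rewrite ler_pdivrMr; lra.
  exists s => //; rewrite softE // soft0 //; split; first lra.
  rewrite -(ler_pM2l (_ : 0 < 1 + lam)); last lra.
  nra.
- pose s := (x1 + x2 + (1 - lam) * (w1 + w2)) / 2.
  have w2s : w2 <= s by rewrite /s; lra.
  exists s; first lra.
  by rewrite !softE //; [split; rewrite /s; lra | lra].
Qed.

Lemma tie_decomposition lam (x1 x2 : R) : 0 < lam -> lam < 1 -> x2 <= x1 ->
  x1 - x2 <= (1 - lam) * (w2 - w1) -> lam * (x1 + (1 - lam) * w1) <= x2 ->
  exists s (th : R), [/\ 0 <= s, 0 <= th <= 1,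
    x1 = lam * s + (1 - lam) * (th * soft s w1 + (1 - th) * soft s w2) &
    x2 = lam * s + (1 - lam) * (th * soft s w2 + (1 - th) * soft s w1)].
Proof.
move=> lam0 lam1 x21 T1 T2.
have [s w1s [sum_eq diff_le]] := tie_level lam0 lam1 x21 T1 T2.
have [th th01 [e1 e2]] := @segment_swap _ (x1 - lam * s) (x2 - lam * s)
  ((1 - lam) * soft s w1) ((1 - lam) * soft s w2) ltac:(lra) ltac:(lra) ltac:(lra).
exists s, th; split => //; first exact: le_trans w1s.
- by rewrite -[LHS](subrK (lam * s)) e1; ring.
- by rewrite -[LHS](subrK (lam * s)) e2; ring.
Qed.

Lemma rowl_cert_sorted lam x : 0 < lam -> lam < 1 -> 0 <= x.2 <= x.1 ->
  exists y, rowl_cert lam x y.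
Proof.
move=> lam0 lam1 /andP[x2_ge0 x21].
have w2_ge0 : 0 <= w2 := le_trans w1_ge0 (ltW w1_lt_w2).
set u1 := soft_inv lam x.1 w1; set u2 := soft_inv lam x.2 w2.
have [u21 | u12] := lerP u2 u1.
  have u_sorted : 0 <= (u1, u2).2 <= (u1, u2).1.
    by rewrite /= u21 soft_inv_ge0 // (le_trans x2_ge0).
  have pp : prox_point (rowl w1 w2) (u1, u2) (soft u1 w1, soft u2 w2).
    exact: prox_point_rowl_sorted u_sorted.
  exists (soft u1 w1, soft u2 w2), (u1, u2), (soft u1 w1, soft u2 w2), (soft u1 w1, soft u2 w2), 1.
  split => //; first by rewrite ler01 lexx.
  - by rewrite scale1r subrr scale0r addr0.
  - by rewrite add2E !scale2E /= /u1 /u2 !soft_invK //; case: (x).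
have [T1 T2] := soft_inv_crossing lam0 x21 u12.
have [s [th [s0 th01 e1 e2]]] := tie_decomposition lam0 lam1 x21 ltac:(lra) (ltW T2).
have pp : prox_point (rowl w1 w2) (s, s) (soft s w1, soft s w2).
  by apply: prox_point_rowl_sorted; rewrite /= s0 lexx.
have pq : prox_point (rowl w1 w2) (s, s) (soft s w2, soft s w1).
  exact: prox_point_rowl_sym rowl_symmetry_swap pp.
exists (th *: (soft s w1, soft s w2) + (1 - th) *: (soft s w2, soft s w1)), (s, s),
  (soft s w1, soft s w2), (soft s w2, soft s w1), th; split => //.
by rewrite !add2E !scale2E /= -e1 -e2; case: (x).
Qed.

Lemma rowl_cert_exists lam x : 0 < lam -> lam < 1 -> exists y, rowl_cert lam x y.
Proof.
move=> lam0 lam1; case: x => a b.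
wlog b_ge0 : b / 0 <= b.
  move=> sym; have [b_ge0 | b_lt0] := lerP 0 b; first exact: sym.
  have [y cy] := sym (- b) ltac:(lra).
  by exists (y.1, - y.2); have := rowl_cert_sym rowl_symmetry_negr cy; rewrite /= opprK.
wlog a_ge0 : a / 0 <= a.
  move=> sym; have [a_ge0 | a_lt0] := lerP 0 a; first exact: sym.
  have [y cy] := sym (- a) ltac:(lra).
  by exists (- y.1, y.2); have := rowl_cert_sym rowl_symmetry_negl cy; rewrite /= opprK.
wlog ba : a b a_ge0 b_ge0 / b <= a.
  move=> sym; have [ba | ab] := lerP b a; first exact: sym.
  have [y cy] := sym b a b_ge0 a_ge0 (ltW ab).
  by exists (y.2, y.1); apply: (rowl_cert_sym rowl_symmetry_swap cy).
by apply: rowl_cert_sorted; rewrite //= b_ge0.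
Qed.

Definition rowl_quad z := rowl w1 w2 z + sqnorm2 z / 2.

Lemma rowl_cert_subgradient lam x y : rowl_cert lam x y ->
  exists u, subgradient (fbiconj_real rowl_quad) y u /\ x = lam *: u + (1 - lam) *: y.
Proof.
move=> [u [p [q [th [th01 pp pq -> ->]]]]]; exists u; split => //.
by apply: subgradient_fbiconj_real => //; exact: prox_point_subgradient.
Qed.

Lemma rowl_envE z : rowl_env w1 w2 z = (fbiconj_real rowl_quad z - sqnorm2 z / 2)%:E.
Proof.
have p0 := @prox_point_rowl_sorted 0 ltac:(by rewrite lexx).
by rewrite /rowl_env (fbiconj_realE (prox_point_subgradient p0)).
Qed.
End Rowl.

Theorem corollary2 (R : realType) (w1 w2 : R) (hw1 : 0 <= w1) (hw12 : w1 < w2)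
  (delta : R) (hdelta : 0 < delta) :
  exists Rd : R * R -> R * R,
    (forall x, is_sprox (fun y => (rowl_env w1 w2 y * ((delta + 1)^-1)%:E)%E) x (Rd x)) /\
    (exists f : R * R -> R,
        convex_fun2 f /\
        (forall x, differentiable f x) /\
        (forall x h, 'd f x h = inner2 (Rd x) h)) /\
    (forall x y, enorm2 (Rd x - Rd y) <= (1 + delta^-1) * enorm2 (x - y)).
Proof.
set lam := (delta + 1)^-1.
have lam_gt0 : 0 < lam by rewrite invr_gt0; lra.
have lam_lt1 : lam < 1 by rewrite invf_lt1; lra.
have Lip_const : (1 - lam)^-1 = 1 + delta^-1 by rewrite /lam; field; lra.
have [Rd cert] := choice (fun x => rowl_cert_exists hw1 hw12 x lam_gt0 lam_lt1).
have growth x z : env_prox_obj (fbiconj_real (rowl_quad w1 w2)) lam x (Rd x)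
    + (1 - lam) / 2 * sqnorm2 (z - Rd x) <= env_prox_obj (fbiconj_real (rowl_quad w1 w2)) lam x z.
  have [u [Gu xE]] := rowl_cert_subgradient (cert x).
  exact: (env_prox_obj_growth (ltW lam_gt0) Gu xE).
have Rd_lip := Rd_lipschitz lam_lt1 growth.
exists Rd; split; [|split].
- by apply: (Rd_is_sprox lam_lt1 growth) => z; rewrite rowl_envE // -EFinM.
- have sub := prox_potential_subgradient lam_lt1 growth.
  have L_ge0 : 0 <= (1 - lam)^-1 by rewrite invr_ge0 subr_ge0 (ltW lam_lt1).
  have diff x := differentiable_of_remainder L_ge0 (subgradient_remainder sub Rd_lip x).
  exists (prox_potential (fbiconj_real (rowl_quad w1 w2)) lam Rd); split.
    by apply: subgradient_convex => x; exists (Rd x).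
  split=> [x | x h]; first exact: (diff x).1.
  by rewrite (diff x).2.
- by move=> x y; rewrite -Lip_const.
Qed.
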